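(* For simple random walk on a finite tree $T=(S,E)$ with a unique self-loop added at one vertex, for every $\varepsilon\in(0,1)$, \[ t_{\rm mix}(\varepsilon)\le\big(2\,\mathrm{diam}(T)+1\big)|E|\,\log\!\Big(\frac{2|E|}{\varepsilon}\Big). \]
   Context: $|E|$ counts the self-loop as one edge. Degrees count the self-loop twice; simple random walk moves from $v$ along a uniformly chosen edge-end at $v$, with transition matrix $P$ and stationary distribution $\pi(v)=\deg(v)/\sum_z\deg(z)$. $t_{\rm mix}(\varepsilon)=\min\{t:\max_x\|P^t(x,\cdot)-\pi\|_{TV}\le\varepsilon\}$. $\mathrm{diam}(T)$ is the maximal graph distance between two vertices. *)

From HB Require Import structures.
From mathcomp Require Import all_boot all_order all_algebra.
From mathcomp Require Import all_classical all_reals all_analysis.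
Set Implicit Arguments. Unset Strict Implicit. Unset Printing Implicit Defensive.
Import Order.TTheory GRing.Theory Num.Theory.
Local Open Scope ring_scope.

Section Graphs.
Variable S : finType.

Definition simple_graph (e : rel S) : Prop :=
  symmetric e /\ irreflexive e.

Definition acyclic (e : rel S) : Prop :=
  forall c : seq S, uniq c -> (2 < size c)%N -> ~~ cycle e c.

Definition is_tree (e : rel S) : Prop :=
  simple_graph e /\ (forall x y : S, connect e x y) /\ acyclic e.

Definition nedges (e : rel S) : nat := (#|[set p : S * S | e p.1 p.2]| %/ 2)%N.

Fixpoint reach (e : rel S) (n : nat) (x y : S) : bool :=
  match n with
  | 0 => x == y
  | n'.+1 => [exists z, e x z && reach e n' z y]
  end.

(* graph distance (minimal walk length); in a connected graph on S the
   distance is < #|S|, so the bounded search is exact there. *)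
Definition gdist (e : rel S) (x y : S) : nat :=
  \big[minn/#|S|]_(n < #|S| | reach e n x y) n.

Definition diam (e : rel S) : nat := \max_(x : S) \max_(y : S) gdist e x y.

(* |E| counts the self-loop as one edge *)
Definition nE (e : rel S) : nat := (nedges e).+1.

(* degree: the self-loop counts twice *)
Definition deg (e : rel S) (v0 v : S) : nat :=
  (#|[set y | e v y]| + 2 * (v == v0))%N.

Variable R : realType.

(* simple random walk: move along a uniformly chosen edge-end at x *)
Definition srw (e : rel S) (v0 : S) (x y : S) : R :=
  ((e x y)%:R + ((x == v0) && (y == v0))%:R *+ 2) / (deg e v0 x)%:R.

Definition stat (e : rel S) (v0 : S) (v : S) : R :=
  (deg e v0 v)%:R / (\sum_(z : S) (deg e v0 z)%:R).

Fixpoint Ppow (P : S -> S -> R) (t : nat) (x y : S) : R :=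
  match t with
  | 0 => (x == y)%:R
  | t'.+1 => \sum_(z : S) Ppow P t' x z * P z y
  end.

Definition tv_dist (mu nu : S -> R) : R := 2^-1 * \sum_(y : S) `|mu y - nu y|.

Definition dmax (P : S -> S -> R) (pi : S -> R) (t : nat) : R :=
  \big[Num.max/0]_(x : S) tv_dist (Ppow P t x) pi.

Definition is_tmix (P : S -> S -> R) (pi : S -> R) (eps : R) (t : nat) : Prop :=
  dmax P pi t <= eps /\ (forall s, (s < t)%N -> ~ (dmax P pi s <= eps)).

End Graphs.

From HB Require Import structures.
From mathcomp Require Import all_boot all_order all_algebra.
From mathcomp Require Import all_classical all_reals all_analysis.
From mathcomp Require Import ring lra.
Set Implicit Arguments. Unset Strict Implicit. Unset Printing Implicit Defensive.
Import Order.TTheory GRing.Theory Num.Theory.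

(* The walk is reversible for [pi = deg / 2|E|], the edge weight [w x y] being
   the number of edge-ends from [x] to [y] divided by [2|E|].  Every vertex is
   joined to the looped vertex [v0] by a path of length at most [diam] in a
   shortest-path tree; telescoping [g x - g v0] along it (differences along
   tree edges), resp. [g x] with alternating signs (sums along tree edges,
   closed by the loop term [2 g v0]), gives the Poincare inequalities for
   [I - P] and [I + P] with constant [K = (diam + 1/4) 2|E|].  So [P] shrinks
   mean-zero functions by [1 - 1/K] in [L^2(pi)], and Cauchy-Schwarz applied
   to the density [P^t(x, .) / pi - 1] yields
   [4 TV^2 <= (1 - 1/K)^(2t) / pi x <= exp (-2t/K) 2|E|]. *)

Section Distance.
Variables (S : finType) (e : rel S).

Lemma reach_path x p : path e x p -> reach e (size p) x (last x p).
Proof.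
elim: p x => [|y p IHp] x /=; first by rewrite eqxx.
by case/andP=> exy /IHp reach_y; apply/existsP; exists y; rewrite exy.
Qed.

Lemma connect_reach x y :
  connect e x y -> exists2 n, (n < #|S|)%N & reach e n x y.
Proof.
case/connectP=> p /shortenP[q q_path q_uniq _] ->.
exists (size q); last exact: reach_path.
by have := max_card (mem (x :: q)); rewrite (card_uniqP q_uniq).
Qed.

Lemma gdist_le x y n : (n < #|S|)%N -> reach e n x y -> (gdist e x y <= n)%N.
Proof.
move=> n_lt reach_n; rewrite /gdist.
have : Ordinal n_lt \in index_enum 'I_#|S| by rewrite mem_index_enum.
elim: (index_enum _) => [//|i r IHr]; rewrite inE big_cons => /predU1P[<-|/IHr].
  by rewrite reach_n geq_minl.
by case: ifP => // _ /(leq_trans (geq_minr _ _)).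
Qed.

Lemma reach_gdist x y : connect e x y ->
  reach e (gdist e x y) x y /\ (gdist e x y < #|S|)%N.
Proof.
case/connect_reach=> n n_lt reach_n.
have : (gdist e x y == #|S|) ||
       ((gdist e x y < #|S|)%N && reach e (gdist e x y) x y).
  apply: (big_ind (fun m => (m == #|S|) || ((m < #|S|)%N && reach e m x y))).
  - by rewrite eqxx.
  - by move=> a b ha hb; rewrite /minn; case: ifP.
  - by move=> i reach_i; rewrite ltn_ord reach_i orbT.
case/orP=> [/eqP dist_eq|/andP[]//].
by have := gdist_le n_lt reach_n; rewrite dist_eq leqNgt n_lt.
Qed.

End Distance.

Section RootedTree.
Variables (S : finType) (e : rel S) (v0 : S).
Hypothesis e_connected : forall x y, connect e x y.

Definition depth x := gdist e x v0.

Lemma depth_le_diam x : (depth x <= diam e)%N.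
Proof.
rewrite /depth /diam.
apply: leq_trans _ (@leq_bigmax _ (fun x => \max_y gdist e x y) x) => /=.
exact: (@leq_bigmax _ (fun y => gdist e x y) v0).
Qed.

Definition parent x := odflt v0 [pick z | e x z && (depth z < depth x)%N].

Lemma parent_spec x :
  x != v0 -> e x (parent x) && (depth (parent x) < depth x)%N.
Proof.
move=> xNv0; rewrite /parent; case: pickP => [z -> //|no_parent].
have [] := reach_gdist (e_connected x v0); rewrite -/(depth x).
case def_d: (depth x) => [|k]; first by move/eqP=> x_v0; rewrite x_v0 eqxx in xNv0.
case/existsP=> z /andP[exz reach_z] k_lt.
have := no_parent z; rewrite exz def_d ltnS /depth.
by rewrite (gdist_le (ltnW k_lt) reach_z).
Qed.

End RootedTree.

Section Degrees.
Variables (S : finType) (e : rel S) (v0 : S).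
Hypotheses (e_sym : symmetric e) (e_irr : irreflexive e).

Let arcs := [set p : S * S | e p.1 p.2].

Lemma card_arcs : #|arcs| = (2 * nedges e)%N.
Proof.
pose up := [set p : S * S | (enum_rank p.1 < enum_rank p.2)%N].
pose flip (p : S * S) := (p.2, p.1).
have flipK : involutive flip by case.
have down : arcs :\: up = flip @: (arcs :&: up).
  apply/setP=> p; rewrite -{2}[p]flipK (mem_imset _ _ (inv_inj flipK)).
  case: p => x y; rewrite !inE /= (e_sym x y) andbC; apply: andb_id2l => eyx.
  have ne : (enum_rank y : nat) != enum_rank x.
    by apply: contraTneq eyx => /val_inj/enum_rank_inj ->; rewrite e_irr.
  by rewrite -leqNgt leq_eqVlt (negbTE ne).
rewrite /nedges -(cardsID up arcs) down (card_imset _ (inv_inj flipK)).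
by set k := #|arcs :&: up|; rewrite addnn -mul2n mulKn.
Qed.

Lemma sum_deg : (\sum_x deg e v0 x)%N = (2 * nE e)%N.
Proof.
have loop : (\sum_x 2 * (x == v0))%N = 2.
  by rewrite (bigD1 v0) //= eqxx big1 // => x /negbTE->.
rewrite big_split /= loop /nE mulnS addnC -card_arcs -sum1_card; congr (_ + _).
rewrite (eq_bigl (fun p : S * S => xpredT p.1 && e p.1 p.2)) => [|p]; last by rewrite inE.
rewrite -(pair_big_dep xpredT e (fun _ _ => 1%N)) /=.
by apply: eq_bigr => x _; rewrite sum1_card; apply: eq_card => y; rewrite inE.
Qed.

End Degrees.

Local Open Scope ring_scope.

Lemma ler_sum_subpred (R : numDomainType) (I : finType) (P1 P2 : pred I)
    (F : I -> R) :
  (forall i, P1 i -> P2 i) -> (forall i, P2 i -> 0 <= F i) ->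
  \sum_(i | P1 i) F i <= \sum_(i | P2 i) F i.
Proof.
move=> sub12 F_ge0; rewrite [leLHS]big_mkcond [leRHS]big_mkcond ler_sum // => i _.
by case: (boolP (P1 i)) => [/sub12 ->//|_]; case: ifP => // /F_ge0.
Qed.

Lemma sqrD_le (R : realFieldType) (a b v q : R) : 0 < v -> b ^+ 2 <= v * q ->
  (a + b) ^+ 2 <= (1 + v) * (a ^+ 2 + q).
Proof.
move=> v_gt0 b_le; have sq_ge0 := sqr_ge0 (v * a - b).
have slack : 0 <= (1 + v) * (v * q - b ^+ 2) by rewrite mulr_ge0 ?subr_ge0; lra.
by rewrite -subr_ge0 -(pmulr_rge0 _ v_gt0); nra.
Qed.


Section ReversibleChain.
Variables (R : realType) (S : finType) (w P : S -> S -> R) (pi : S -> R).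
Hypothesis w_sym : forall x y, w x y = w y x.
Hypothesis pi_def : forall x, pi x = \sum_y w x y.
Hypothesis pi_gt0 : forall x, 0 < pi x.
Hypothesis pi_sum1 : \sum_x pi x = 1.
Hypothesis P_def : forall x y, pi x * P x y = w x y.

Definition dotpi (u v : S -> R) := \sum_x pi x * u x * v x.
Definition Pmap (u : S -> R) x := \sum_y P x y * u y.
Definition meanpi (u : S -> R) := \sum_x pi x * u x.

Let pi_neq0 x : pi x != 0. Proof. by rewrite gt_eqF. Qed.

Lemma P_div x y : P x y = w x y / pi x.
Proof. by rewrite -P_def mulrAC divff ?mul1r. Qed.

Lemma sum_P1 x : \sum_y P x y = 1.
Proof.
apply: (mulfI (pi_neq0 x)); rewrite mulr1 mulr_sumr [RHS]pi_def.
by apply: eq_bigr => y _; rewrite P_def.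
Qed.

Lemma dotpiC u v : dotpi u v = dotpi v u.
Proof. by apply: eq_bigr => x _; rewrite mulrAC. Qed.

Lemma dotpiDl a b u v z :
  dotpi (fun x => a * u x + b * v x) z = a * dotpi u z + b * dotpi v z.
Proof. by rewrite /dotpi !mulr_sumr -big_split; apply: eq_bigr => x _ /=; ring. Qed.

Lemma dotpiDr a b u v z :
  dotpi z (fun x => a * u x + b * v x) = a * dotpi z u + b * dotpi z v.
Proof. by rewrite dotpiC dotpiDl !(dotpiC z). Qed.

Lemma PmapD a b u v :
  Pmap (fun x => a * u x + b * v x) = fun x => a * Pmap u x + b * Pmap v x.
Proof.
apply: funext => x; rewrite /Pmap !mulr_sumr -big_split.
by apply: eq_bigr => y _ /=; ring.
Qed.

Lemma meanpiD a b u v :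
  meanpi (fun x => a * u x + b * v x) = a * meanpi u + b * meanpi v.
Proof. by rewrite /meanpi !mulr_sumr -big_split; apply: eq_bigr => x _ /=; ring. Qed.

Lemma dotpi_Pmap u v : dotpi u (Pmap v) = \sum_x \sum_y w x y * u x * v y.
Proof.
apply: eq_bigr => x _; rewrite mulr_sumr; apply: eq_bigr => y _.
by rewrite -P_def; ring.
Qed.

Lemma dotpi_PmapC u v : dotpi u (Pmap v) = dotpi v (Pmap u).
Proof.
rewrite !dotpi_Pmap exchange_big; apply: eq_bigr => x _; apply: eq_bigr => y _.
by rewrite w_sym; ring.
Qed.

Lemma meanpi_Pmap u : meanpi (Pmap u) = meanpi u.
Proof.
transitivity (\sum_x \sum_y w x y * u y).
  apply: eq_bigr => x _; rewrite /Pmap mulr_sumr; apply: eq_bigr => y _.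
  by rewrite mulrA P_def.
rewrite exchange_big; apply: eq_bigr => y _ /=.
by rewrite -mulr_suml pi_def; congr (_ * _); apply: eq_bigr => x _; rewrite w_sym.
Qed.

Lemma dirichlet_form (sg : R) g : sg ^+ 2 = 1 ->
  dotpi g g + sg * dotpi g (Pmap g) =
  2^-1 * \sum_x \sum_y w x y * (g x + sg * g y) ^+ 2.
Proof.
move=> sg2; have sumsq (h : S -> R) : \sum_x \sum_y w x y * h x ^+ 2 = dotpi h h.
  by apply: eq_bigr => x _; rewrite -mulr_suml -pi_def; ring.
have sumsq' (h : S -> R) : \sum_x \sum_y w x y * h y ^+ 2 = dotpi h h.
  rewrite exchange_big -sumsq; apply: eq_bigr => x _; apply: eq_bigr => y _.
  by rewrite w_sym.
have -> : \sum_x \sum_y w x y * (g x + sg * g y) ^+ 2 =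
    \sum_x \sum_y w x y * g x ^+ 2 + \sum_x \sum_y w x y * g y ^+ 2
    + 2 * sg * \sum_x \sum_y w x y * g x * g y.
  rewrite mulr_sumr -!big_split; apply: eq_bigr => x _.
  rewrite mulr_sumr -!big_split; apply: eq_bigr => y _ /=.
  by rewrite sqrrD exprMn sg2; ring.
by rewrite sumsq sumsq' -dotpi_Pmap; field.
Qed.

(* Together the two inequalities confine the spectrum of [P] on mean-zero
   functions to [[-(1 - K^-1), 1 - K^-1]]. *)
Definition two_sided_poincare (K : R) := forall g, meanpi g = 0 ->
  dotpi g g <= K * (dotpi g g - dotpi g (Pmap g)) /\
  dotpi g g <= K * (dotpi g g + dotpi g (Pmap g)).

Lemma two_sided_poincare_dotpi K g : 0 < K -> two_sided_poincare K ->
  meanpi g = 0 -> `|dotpi g (Pmap g)| <= (1 - K^-1) * dotpi g g.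
Proof.
move=> K_gt0 gap /gap[minus plus].
rewrite -ler_pdivrMl // in minus; rewrite -ler_pdivrMl // in plus.
by rewrite mulrBl mul1r ler_norml; apply/andP; split; lra.
Qed.

Lemma dotpi_Pmap_contract K f : 1 < K -> two_sided_poincare K -> meanpi f = 0 ->
  dotpi (Pmap f) (Pmap f) <= (1 - K^-1) ^+ 2 * dotpi f f.
Proof.
move=> K_gt1 gap f0; have K_gt0 : 0 < K by apply: lt_trans K_gt1.
set c := 1 - K^-1; have c_gt0 : 0 < c by rewrite subr_gt0 invf_lt1.
(* Test the gap on [c f - P f] and [c f + P f] and add up. *)
have gap_at sg : meanpi (fun x => c * f x + sg * Pmap f x) = 0.
  by rewrite meanpiD meanpi_Pmap f0; ring.
have /ler_normlP[+ _] := two_sided_poincare_dotpi K_gt0 gap (gap_at (-1)).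
have /ler_normlP[_] := two_sided_poincare_dotpi K_gt0 gap (gap_at 1).
rewrite !PmapD !dotpiDl !dotpiDr (dotpiC (Pmap f) f) (dotpi_PmapC f (Pmap f)) -/c.
set a := dotpi f f; set b := dotpi f (Pmap f); set n := dotpi (Pmap f) (Pmap f).
set q := dotpi (Pmap f) (Pmap (Pmap f)) => plus minus.
have : 0 <= 2 * c * (c ^+ 2 * a - n) by nra.
by rewrite pmulr_rge0 ?mulr_gt0 // subr_ge0.
Qed.

Lemma sum_Ppow1 t x : \sum_y Ppow P t x y = 1.
Proof.
elim: t => [|t IHt] /=.
  by rewrite (bigD1 x) //= eqxx big1 ?addr0 // => y /negbTE; rewrite eq_sym => ->.
rewrite exchange_big /= -[RHS]IHt; apply: eq_bigr => z _.
by rewrite -mulr_sumr sum_P1 mulr1.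
Qed.

Lemma tv_dist_Ppow_eq0 x0 t x : (forall y : S, y = x0) -> tv_dist (Ppow P t x) pi = 0.
Proof.
move=> all_x0; have sum1 (mu : S -> R) : \sum_y mu y = mu x0.
  by rewrite (bigD1 x0) //= big1 ?addr0 // => z; rewrite (all_x0 z) eqxx.
rewrite /tv_dist sum1; suff -> : Ppow P t x x0 = pi x0 by rewrite subrr normr0 mulr0.
by rewrite -sum1 sum_Ppow1 -pi_sum1 sum1.
Qed.

Definition dens x t y := Ppow P t x y / pi y - 1.

Lemma Pmap_dens x t : Pmap (dens x t) = dens x t.+1.
Proof.
apply: funext => y; rewrite /dens /Pmap /=.
under eq_bigr do rewrite mulrBr mulr1.
rewrite sumrB sum_P1 mulr_suml; congr (_ - _); apply: eq_bigr => z _.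
by rewrite !P_div w_sym; field; rewrite !pi_neq0.
Qed.

Lemma meanpi_dens x t : meanpi (dens x t) = 0.
Proof.
rewrite /meanpi /dens; under eq_bigr do rewrite mulrBr mulr1.
rewrite sumrB pi_sum1 -(sum_Ppow1 t x); apply/eqP; rewrite subr_eq0; apply/eqP.
by apply: eq_bigr => y _; rewrite mulrC divfK.
Qed.

Lemma dotpi_dens0 x : dotpi (dens x 0) (dens x 0) <= (pi x)^-1.
Proof.
rewrite /dotpi /dens (bigD1 x) //= eqxx mul1r.
rewrite (eq_bigr (fun y => pi y)) => [|y /negbTE yNx]; last first.
  by rewrite eq_sym yNx mul0r sub0r !mulrN1 opprK.
have -> : \sum_(y | y != x) pi y = 1 - pi x by rewrite -pi_sum1 [in RHS](bigD1 x) //=; ring.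
have -> : pi x * ((pi x)^-1 - 1) * ((pi x)^-1 - 1) = (pi x)^-1 - 2 + pi x.
  by field; rewrite pi_neq0.
lra.
Qed.

Lemma tv_dist_dens x t :
  2 * tv_dist (Ppow P t x) pi = \sum_y pi y * `|dens x t y|.
Proof.
rewrite /tv_dist mulrA divff ?pnatr_eq0 // mul1r; apply: eq_bigr => y _.
rewrite -(gtr0_norm (pi_gt0 y)) -normrM /dens mulrBr mulr1 mulrC divfK //.
by rewrite gtr0_norm.
Qed.

Lemma sqr_meanpi_norm_le u : (\sum_y pi y * `|u y|) ^+ 2 <= dotpi u u.
Proof.
set m := \sum_y pi y * `|u y|.
have var_ge0 : 0 <= \sum_y pi y * (`|u y| - m) ^+ 2.
  by apply: sumr_ge0 => y _; rewrite mulr_ge0 ?sqr_ge0 ?ltW.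
have expand y : pi y * (`|u y| - m) ^+ 2
    = pi y * u y * u y - 2 * m * (pi y * `|u y|) + m ^+ 2 * pi y.
  by rewrite sqrrB real_normK ?num_real //; ring.
rewrite (eq_bigr _ (fun y _ => expand y)) big_split sumrB /= -!mulr_sumr in var_ge0.
by rewrite pi_sum1 -/m in var_ge0; rewrite /dotpi; nra.
Qed.

Lemma sqr_tv_dist_Ppow_le K x t : 1 < K -> two_sided_poincare K ->
  (2 * tv_dist (Ppow P t x) pi) ^+ 2 <= (1 - K^-1) ^+ (2 * t) / pi x.
Proof.
move=> K_gt1 gap; have K_gt0 : 0 < K by apply: lt_trans K_gt1.
have c_ge0 : 0 <= 1 - K^-1 by rewrite subr_ge0 invf_le1 // ltW.
rewrite tv_dist_dens; apply: le_trans (sqr_meanpi_norm_le _) _.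
elim: t => [|t IHt]; first by rewrite mul1r dotpi_dens0.
rewrite -Pmap_dens mulnS exprD -mulrA.
apply: le_trans (dotpi_Pmap_contract K_gt1 gap (meanpi_dens x t)) _.
by rewrite ler_wpM2l // exprn_ge0.
Qed.

Lemma tv_dist_Ppow_le K N eps t x : 1 < K -> two_sided_poincare K ->
  (pi x)^-1 <= N -> 0 < eps -> K * ln (N / eps) <= t%:R ->
  tv_dist (Ppow P t x) pi <= eps.
Proof.
move=> K_gt1 gap piV_le eps_gt0 t_ge; have K_gt0 : 0 < K by apply: lt_trans K_gt1.
have pi_le1 : pi x <= 1.
  by rewrite -pi_sum1 (bigD1 x) //= lerDl sumr_ge0 // => y _; rewrite ltW.
have N_ge1 : 1 <= N by apply: le_trans piV_le; rewrite invf_ge1.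
have N_gt0 : 0 < N by apply: lt_le_trans N_ge1.
have c_ge0 : 0 <= 1 - K^-1 by rewrite subr_ge0 invf_le1 // ltW.
have decay : (1 - K^-1) ^+ (2 * t) <= (eps / N) ^+ 2.
  apply: le_trans (_ : expR (- K^-1) ^+ (2 * t) <= _).
    by rewrite lerXn2r ?nnegrE ?expR_ge0 // expR_ge1Dx.
  rewrite -expRM_natl -[X in _ <= X]lnK ?posrE ?exprn_gt0 ?divr_gt0 //.
  rewrite ler_expR lnXn ?divr_gt0 // -invf_div lnV ?posrE ?divr_gt0 //.
  have L_le : ln (N / eps) <= t%:R / K by rewrite ler_pdivlMr // mulrC.
  by rewrite mulrN natrM -mulrA mulr2n; lra.
have tv_ge0 : 0 <= 2 * tv_dist (Ppow P t x) pi.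
  by rewrite tv_dist_dens; apply: sumr_ge0 => y _; rewrite mulr_ge0 // ltW.
have : (2 * tv_dist (Ppow P t x) pi) ^+ 2 <= eps ^+ 2.
  apply: le_trans (sqr_tv_dist_Ppow_le x t K_gt1 gap) _.
  apply: le_trans (ler_pM (exprn_ge0 _ c_ge0) _ decay piV_le) _.
    by rewrite invr_ge0 ltW.
  have -> : (eps / N) ^+ 2 * N = eps ^+ 2 / N by field; rewrite gt_eqF.
  by rewrite ler_pdivrMr // ler_peMr ?sqr_ge0.
by nra.
Qed.

Section RootedPoincare.
Variables (v0 : S) (p : S -> S) (d : S -> nat) (Dd : nat) (N : R).
Hypothesis d_parent : forall x, x != v0 -> (d (p x) < d x)%N.
Hypothesis d_le : forall x, (d x <= Dd)%N.

(* Edge-end counts, as in [deg], of the tree [x -- p x] plus a loop at [v0]. *)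
Definition tree_weight x y : R :=
  ((x != v0) && (y == p x))%:R + ((y != v0) && (x == p y))%:R
  + ((x == v0) && (y == v0))%:R *+ 2.

Hypothesis tree_weight_le : forall x y, tree_weight x y <= N * w x y.

Lemma sum_tree_weight (F : S -> S -> R) :
  \sum_x \sum_y tree_weight x y * F x y =
  \sum_(x | x != v0) F x (p x) + \sum_(y | y != v0) F (p y) y + 2 * F v0 v0.
Proof.
rewrite (eq_bigr (fun x => \sum_y ((x != v0) && (y == p x))%:R * F x y
   + \sum_y ((y != v0) && (x == p y))%:R * F x y
   + \sum_y ((x == v0) && (y == v0))%:R *+ 2 * F x y)); last first.
  by move=> x _; rewrite -!big_split; apply: eq_bigr => y _ /=; rewrite !mulrDl.
rewrite !big_split /=; congr (_ + _ + _).
- rewrite [RHS]big_mkcond; apply: eq_bigr => x _.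
  rewrite (bigD1 (p x)) //= eqxx andbT big1 ?addr0 => [|y /negbTE->]; last first.
    by rewrite andbF mul0r.
  by case: (x != v0); rewrite ?mul1r ?mul0r.
- rewrite exchange_big [RHS]big_mkcond; apply: eq_bigr => y _ /=.
  rewrite (bigD1 (p y)) //= eqxx andbT big1 ?addr0 => [|x /negbTE->]; last first.
    by rewrite andbF mul0r.
  by case: (y != v0); rewrite ?mul1r ?mul0r.
- rewrite (bigD1 v0) //= [X in _ + X]big1 ?addr0 => [|x /negbTE xNv0]; last first.
    by apply: big1 => y _; rewrite xNv0 mul0rn mul0r.
  rewrite (bigD1 v0) //= eqxx [X in _ + X]big1 ?addr0 => [|y /negbTE->]; last first.
    by rewrite andbF mul0rn mul0r.
  by rewrite mulr_natl.
Qed.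

Lemma sum_tree_edges_le (F : S -> S -> R) : (forall x y, 0 <= F x y) ->
  \sum_(x | x != v0) F x (p x) + \sum_(y | y != v0) F (p y) y + 2 * F v0 v0
  <= N * \sum_x \sum_y w x y * F x y.
Proof.
move=> F_ge0; rewrite -sum_tree_weight mulr_sumr; apply: ler_sum => x _.
by rewrite mulr_sumr; apply: ler_sum => y _; rewrite mulrA ler_wpM2r.
Qed.

Lemma telescope_sqr_le (G s : S -> R) (sg r : R) :
  sg ^+ 2 = 1 -> 0 <= r -> G v0 ^+ 2 <= r / 4 ->
  (forall x, x != v0 -> G x = s x + sg * G (p x)) ->
  forall x, G x ^+ 2 <=
    ((d x)%:R + 4^-1) * (\sum_(z | (z != v0) && (d z <= d x)%N) s z ^+ 2 + r).
Proof.
move=> sg2 r_ge0 G_v0 G_step x.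
pose ssum n := \sum_(z | (z != v0) && (d z <= n)%N) s z ^+ 2.
have ssum_ge0 n : 0 <= ssum n by apply: sumr_ge0 => z _; apply: sqr_ge0.
have root : G v0 ^+ 2 <= ((d v0)%:R + 4^-1) * (ssum (d v0) + r).
  by have := ssum_ge0 (d v0); have : 0 <= (d v0)%:R :> R by []; nra.
suff bound n y : (d y <= n)%N -> G y ^+ 2 <= ((d y)%:R + 4^-1) * (ssum (d y) + r).
  exact: bound.
elim: n y => [|n IHn] {}x d_x; have [->//|xNv0] := eqVneq x v0.
  by have := d_parent xNv0; rewrite ltnNge (leq_trans d_x).
have d_px := d_parent xNv0.
have v_gt0 : 0 < (d (p x))%:R + 4^-1 :> R by have : 0 <= (d (p x))%:R :> R by []; lra.
rewrite G_step //; apply: le_trans (sqrD_le (s x) v_gt0 _) _.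
  by rewrite exprMn sg2 mul1r; apply: IHn; rewrite -ltnS (leq_trans d_px).
have v_le : 1 + ((d (p x))%:R + 4^-1) <= (d x)%:R + 4^-1 :> R.
  by rewrite addrA lerD2r addrC natr1 ler_nat.
have ssum_le : s x ^+ 2 + ssum (d (p x)) <= ssum (d x).
  rewrite /ssum [leRHS](bigD1 x) /=; last by rewrite xNv0 leqnn.
  rewrite lerD2l; apply: ler_sum_subpred => [z /andP[zNv0 d_z]|z _]; last exact: sqr_ge0.
  rewrite zNv0 (leq_trans d_z (ltnW d_px)); apply: contraTneq d_z => ->.
  by rewrite -ltnNge.
by apply: ler_pM; rewrite ?addr_ge0 ?sqr_ge0 // addrA lerD2r.
Qed.

Let K0 : R := Dd%:R + 4^-1.

Lemma sum_pi_telescope_sqr_le (G s : S -> R) (sg r : R) :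
  sg ^+ 2 = 1 -> 0 <= r -> G v0 ^+ 2 <= r / 4 ->
  (forall x, x != v0 -> G x = s x + sg * G (p x)) ->
  \sum_x pi x * G x ^+ 2 <= K0 * (\sum_(z | z != v0) s z ^+ 2 + r).
Proof.
move=> sg2 r_ge0 G_v0 G_step; rewrite -[leRHS]mul1r -pi_sum1 mulr_suml.
apply: ler_sum => x _; rewrite ler_wpM2l ?(ltW (pi_gt0 x)) //.
apply: le_trans (telescope_sqr_le sg2 r_ge0 G_v0 G_step x) _.
apply: ler_pM; rewrite ?addr_ge0 ?sumr_ge0 //.
- by move=> z _; apply: sqr_ge0.
- by rewrite /K0 lerD2r ler_nat.
- by rewrite lerD2r; apply: ler_sum_subpred => [z /andP[]//|z _]; apply: sqr_ge0.
Qed.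

Lemma poincare_minus g : meanpi g = 0 ->
  dotpi g g <= K0 * N * (dotpi g g - dotpi g (Pmap g)).
Proof.
move=> g0; pose F x y := (g x + -1 * g y) ^+ 2.
set Sm := \sum_(z | z != v0) F z (p z).
have var_le : dotpi g g <= \sum_x pi x * (g x - g v0) ^+ 2.
  have -> : \sum_x pi x * (g x - g v0) ^+ 2
      = dotpi g g - 2 * g v0 * meanpi g + g v0 ^+ 2 * \sum_x pi x.
    rewrite /dotpi /meanpi !mulr_sumr -sumrB -big_split.
    by apply: eq_bigr => x _ /=; ring.
  by rewrite g0 pi_sum1; have := sqr_ge0 (g v0); lra.
have tele : \sum_x pi x * (g x - g v0) ^+ 2 <= K0 * (Sm + 0).
  apply: (sum_pi_telescope_sqr_le (s := fun z => g z + -1 * g (p z)) (sg := 1)).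
  - exact: expr1n.
  - by [].
  - by rewrite subrr expr0n mul0r.
  - by move=> x _; ring.
have edges : Sm + Sm <= N * (2 * (dotpi g g - dotpi g (Pmap g))).
  rewrite -mulN1r dirichlet_form ?sqrrN ?expr1n // [2 * (_ * _)]mulrA divff ?pnatr_eq0 // mul1r.
  apply: le_trans (sum_tree_edges_le (F := F) (fun x y => sqr_ge0 _)).
  have -> : \sum_(y | y != v0) F (p y) y = Sm by apply: eq_bigr => y _; rewrite /F; ring.
  have -> : F v0 v0 = 0 by rewrite /F; ring.
  by rewrite -/Sm mulr0 addr0.
have K0_ge0 : 0 <= K0 by rewrite /K0 addr_ge0.
rewrite addr0 in tele; apply: le_trans var_le _; apply: le_trans tele _.
by rewrite -mulrA ler_wpM2l //; lra.
Qed.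

Lemma poincare_plus g : dotpi g g <= K0 * N * (dotpi g g + dotpi g (Pmap g)).
Proof.
pose F x y := (g x + 1 * g y) ^+ 2.
set Sp := \sum_(z | z != v0) F z (p z).
have tele : dotpi g g <= K0 * (Sp + 4 * g v0 ^+ 2).
  rewrite /dotpi; under eq_bigr do rewrite -mulrA -expr2.
  apply: (sum_pi_telescope_sqr_le (s := fun z => g z + 1 * g (p z)) (sg := -1)).
  - by rewrite sqrrN expr1n.
  - by rewrite mulr_ge0 ?sqr_ge0.
  - by rewrite mulrAC divff ?pnatr_eq0 // mul1r.
  - by move=> x _; rewrite /F; ring.
have edges : Sp + Sp + 8 * g v0 ^+ 2 <= N * (2 * (dotpi g g + dotpi g (Pmap g))).
  rewrite -[dotpi g (Pmap g)]mul1r dirichlet_form ?expr1n //.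
  rewrite [2 * (_ * _)]mulrA divff ?pnatr_eq0 // mul1r.
  apply: le_trans (sum_tree_edges_le (F := F) (fun x y => sqr_ge0 _)).
  have -> : \sum_(y | y != v0) F (p y) y = Sp by apply: eq_bigr => y _; rewrite /F; ring.
  by have -> : 2 * F v0 v0 = 8 * g v0 ^+ 2 by rewrite /F; ring.
have K0_ge0 : 0 <= K0 by rewrite /K0 addr_ge0.
apply: le_trans tele _; rewrite -mulrA ler_wpM2l //; lra.
Qed.

Lemma two_sided_tree_poincare : two_sided_poincare (K0 * N).
Proof. by move=> g g0; split; [apply: poincare_minus | apply: poincare_plus]. Qed.

End RootedPoincare.

End ReversibleChain.

Lemma ln_ge1 (R : realType) (x : R) : 4 <= x -> 1 <= ln x.
Proof.
move=> x_ge4; rewrite -[leLHS]expRK ler_ln ?posrE ?expR_gt0 ?(lt_le_trans _ x_ge4) //.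
apply: le_trans x_ge4.
have half_le : expR (2^-1) <= 2 :> R.
  rewrite -[2^-1]opprK expRN -[leRHS]invrK lef_pV2 ?posrE ?expR_gt0 //.
  by have := expR_ge1Dx (- 2^-1 : R); lra.
have -> : expR 1 = expR (2^-1) ^+ 2 :> R by rewrite expr2 -expRD; congr expR; field.
by have := expR_gt0 (2^-1 : R); nra.
Qed.

(* The slack [(2D + 1) M L - (D + 1/4) 2M L = M L / 2 >= 1] absorbs rounding
   the bound down to an integer. *)
Lemma mixing_bound_arith (R : realFieldType) (D M L t : R) :
  0 <= D -> 2 <= M -> 1 <= L -> (2 * D + 1) * M * L < t + 1 ->
  (D + 4^-1) * (2 * M) * L <= t.
Proof. move=> D_ge0 M_ge2 L_ge1 lt_t; nra. Qed.

Lemma exists_tmix_le (R : realType) (S : finType) (P : S -> S -> R)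
    (pi : S -> R) (eps : R) t0 :
  0 <= eps -> (forall x, tv_dist (Ppow P t0 x) pi <= eps) ->
  exists2 t, is_tmix P pi eps t & (t <= t0)%N.
Proof.
move=> eps_ge0 tv_le; have dmax_le : dmax P pi t0 <= eps.
  by apply: (big_ind (fun v => v <= eps)) => // a b; rewrite ge_max => -> ->.
have [t dmax_t t_min] := ex_minnP (ex_intro (fun t => dmax P pi t <= eps) t0 dmax_le).
exists t; last exact: t_min.
by split=> // s s_lt /t_min; rewrite leqNgt s_lt.
Qed.

Section TreeWalk.
Variables (R : realType) (S : finType) (e : rel S) (v0 : S).
Hypotheses (e_sym : symmetric e) (e_irr : irreflexive e).
Hypothesis e_connected : forall x y, connect e x y.

Let adj x y : R := (e x y)%:R + ((x == v0) && (y == v0))%:R *+ 2.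
Let Ntot : R := (2 * nE e)%:R.
Let w x y := adj x y / Ntot.

Lemma deg_adj x : (deg e v0 x)%:R = \sum_y adj x y.
Proof.
rewrite /deg natrD -sum1_card natr_sum big_mkcond big_split /=; congr (_ + _).
  by apply: eq_bigr => y _; rewrite inE; case: (e x y).
rewrite (bigD1 v0) //= eqxx andbT big1 ?addr0 => [|y /negbTE->]; last first.
  by rewrite andbF mul0rn.
by rewrite natrM mulr_natl.
Qed.

Lemma deg_gt0 x : (0 < deg e v0 x)%N.
Proof.
rewrite /deg; have [->|xNv0] := eqVneq x v0; first by rewrite muln1 addn2.
case/andP: (parent_spec e_connected xNv0) => e_par _.
by rewrite muln0 addn0; apply/card_gt0P; exists (parent e v0 x); rewrite inE.
Qed.

Lemma sum_degR : \sum_x (deg e v0 x)%:R = Ntot.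
Proof. by rewrite -natr_sum sum_deg. Qed.

Let Ntot_gt0 : 0 < Ntot.
Proof. by rewrite ltr0n muln_gt0. Qed.

Lemma weight_sym x y : w x y = w y x.
Proof. by rewrite /w /adj e_sym andbC. Qed.

Lemma stat_sum_weight x : stat R e v0 x = \sum_y w x y.
Proof. by rewrite /stat sum_degR deg_adj mulr_suml. Qed.

Lemma stat_gt0 x : 0 < stat R e v0 x.
Proof. by rewrite /stat divr_gt0 ?sum_degR // ltr0n deg_gt0. Qed.

Lemma sum_stat1 : \sum_x stat R e v0 x = 1.
Proof. by rewrite /stat -mulr_suml sum_degR divff ?gt_eqF. Qed.

Lemma stat_srw x y : stat R e v0 x * srw R e v0 x y = w x y.
Proof.
have deg_neq0 : (deg e v0 x)%:R != 0 :> R by rewrite pnatr_eq0 -lt0n deg_gt0.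
by rewrite /stat /srw /w sum_degR -/(adj x y); field; rewrite deg_neq0 gt_eqF.
Qed.

Lemma statV_le x : (stat R e v0 x)^-1 <= Ntot.
Proof.
rewrite /stat sum_degR invf_div ler_pdivrMr ?ltr0n ?deg_gt0 //.
by rewrite ler_peMr ?(ltW Ntot_gt0) // ler1n deg_gt0.
Qed.

Lemma tree_weight_le x y : tree_weight R v0 (parent e v0) x y <= Ntot * w x y.
Proof.
rewrite /w mulrC divfK ?gt_eqF // /tree_weight /adj lerD2r.
have parent_edge z : z != v0 -> e z (parent e v0 z).
  by move/(parent_spec e_connected)/andP=> [].
case: (boolP (x != v0)) => [xNv0|_]; case: (boolP (y != v0)) => [yNv0|_] /=;
  rewrite ?add0r ?addr0 ?ler0n //.
- have [y_px|_] := eqVneq y (parent e v0 x); have [x_py|_] := eqVneq x (parent e v0 y).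
  + have /andP[_] := parent_spec e_connected xNv0.
    have /andP[_] := parent_spec e_connected yNv0.
    by rewrite -y_px -x_py => lt_yx /(ltn_trans lt_yx); rewrite ltnn.
  + by rewrite y_px parent_edge // addr0.
  + by rewrite x_py e_sym parent_edge // add0r.
  + by rewrite addr0 ler0n.
- by case: eqP => [->|_]; [rewrite parent_edge | rewrite ler0n].
- by case: eqP => [->|_]; [rewrite e_sym parent_edge | rewrite ler0n].
Qed.

Lemma srw_tv_dist_le eps t x : 0 < eps < 1 ->
  ((2 * diam e + 1)%N)%:R * (nE e)%:R * ln ((2 * nE e)%:R / eps) < t%:R + 1 ->
  tv_dist (Ppow (srw R e v0) t x) (stat R e v0) <= eps.
Proof.
move=> /andP[eps_gt0 eps_lt1] t_gt.
case: (pickP (fun y => y != v0)) => [x1 x1Nv0|all_v0]; last first.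
  rewrite (tv_dist_Ppow_eq0 stat_sum_weight stat_gt0 sum_stat1 stat_srw (x0 := v0)) ?(ltW eps_gt0) //.
  by move=> y; apply/eqP; rewrite -[y == v0]negbK all_v0.
have diam_ge1 : (1 <= diam e)%N.
  have /andP[_ lt_par] := parent_spec e_connected x1Nv0.
  exact: leq_trans (leq_ltn_trans (leq0n _) lt_par) (depth_le_diam e v0 x1).
have nE_ge2 : (2 <= nE e)%N.
  suff : (3 <= 2 * nE e)%N by case: (nE e) => [|[|n]].
  rewrite -(sum_deg v0 e_sym e_irr) (bigD1 v0) // (bigD1 x1) //= addnA.
  apply: leq_trans (leq_addr _ _); apply: (@leq_add 2 1) (deg_gt0 x1).
  by rewrite /deg eqxx muln1 leq_addl.
have M_ge2 : 2 <= (nE e)%:R :> R by rewrite ler_nat.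
have D_ge1 : 1 <= (diam e)%:R :> R by rewrite ler1n.
have L_ge1 : 1 <= ln (Ntot / eps).
  apply: ln_ge1; rewrite ler_pdivlMr // /Ntot natrM; lra.
apply: (tv_dist_Ppow_le weight_sym stat_sum_weight stat_gt0 sum_stat1 stat_srw
  (K := ((diam e)%:R + 4^-1) * Ntot) (N := Ntot)) => //.
- by rewrite /Ntot natrM; nra.
- apply: (two_sided_tree_poincare weight_sym stat_sum_weight stat_gt0 sum_stat1 stat_srw
    (p := parent e v0) (d := depth e v0) _ (depth_le_diam e v0) tree_weight_le).
  by move=> y /(parent_spec e_connected)/andP[].
- exact: statV_le.
- rewrite natrD natrM /Ntot natrM in t_gt L_ge1 *.
  exact: mixing_bound_arith (ler0n _ _) M_ge2 L_ge1 t_gt.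
Qed.

End TreeWalk.

Unset Implicit Arguments.

Theorem corollary2p5 (R : realType) (S : finType) (e : rel S) (v0 : S)
    (eps : R) :
  is_tree e -> 0 < eps < 1 ->
  exists t : nat,
    is_tmix (srw R e v0) (stat R e v0) eps t /\
    t%:R <= ((2 * diam e + 1)%N)%:R * (nE e)%:R
            * ln ((2 * nE e)%:R / eps).
Proof.
move=> [[e_sym e_irr] [e_connected _]] eps_01; have /andP[eps_gt0 eps_lt1] := eps_01.
set B := _ * _ * _.
have B_ge0 : 0 <= B.
  rewrite !mulr_ge0 ?ler0n // ln_ge0 // ler_pdivlMr // mul1r.
  by apply: le_trans (ltW eps_lt1) _; rewrite ler1n muln_gt0.
have /andP[t0_le t0_gt] := truncn_itv B_ge0; rewrite -natr1 in t0_gt.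
have [t t_mix t_le] := exists_tmix_le (ltW eps_gt0)
  (fun x => srw_tv_dist_le (R := R) v0 e_sym e_irr e_connected x eps_01 t0_gt).
by exists t; split=> //; apply: le_trans t0_le; rewrite ler_nat.
Qed.
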